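(* Assume the van Kampen setup below, with compatible future retracts $Q_k:\vec\pi_1(X_k)\to\vec\pi_1(X_k,B_k)$ and compatible future retracts $P_k:\vec\pi_1(X_k,B_k)\to\vec\pi_1(X_k,A_k)$ ($k=0,1,2$), and let $P:\vec\pi_1(X,B)\to\vec\pi_1(X,A)$ be the unique functor with $P\circ j_k=j'_k\circ P_k$ ($k=1,2$). For $x\in B$ let $\eta_x:x\to P(x)$ be the image in $\vec\pi_1(X,B)$ of the unit $\eta^k_x$ of $P_k$ for any $k\in\{1,2\}$ with $x\in B_k$ (this does not depend on $k$). Then for every morphism $[\gamma]:x\to y$ of $\vec\pi_1(X,B)$ one has $\eta_y\circ[\gamma]=P([\gamma])\circ\eta_x$ in $\vec\pi_1(X,B)$.
   Context: A d-space is a topological space with a set of continuous paths $[0,1]\to X$ (dipaths) containing all constant paths, closed under precomposition with continuous non-decreasing maps $[0,1]\to[0,1]$ and under concatenation; subsets carry the dipaths with image in them. The fundamental category $\vec\pi_1(X)$ has objects the points of $X$ and morphisms $a\to b$ the classes of dipaths from $a$ to $b$ modulo the equivalence relation generated by endpoint-fixing directed homotopies; composition is concatenation. For $A\subseteq X$, $\vec\pi_1(X,A)$ is the full subcategory on objects in $A$. For $A\subseteq B\subseteq X$ with inclusion $\iota:\vec\pi_1(X,A)\to\vec\pi_1(X,B)$, a future retract is a functor $P:\vec\pi_1(X,B)\to\vec\pi_1(X,A)$ left adjoint to $\iota$ whose unit satisfies $\eta_a=\mathrm{id}_a$ for $a\in A$. Van Kampen setup: $X$ a d-space, $X_1,X_2\subseteq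 X$ with $X=\mathrm{Int}(X_1)\cup\mathrm{Int}(X_2)$, dipaths of $X$ the finite concatenations of dipaths of $X_1$ and $X_2$, $X_0=X_1\cap X_2$. For $k=0,1,2$, $A_k\subseteq B_k\subseteq X_k$ with $A_0=A_1\cap A_2$, $B_0=B_1\cap B_2$, $A=A_1\cup A_2$, $B=B_1\cup B_2$, $A=\mathrm{Int}_A(A_1)\cup\mathrm{Int}_A(A_2)$, $B=\mathrm{Int}_B(B_1)\cup\mathrm{Int}_B(B_2)$. Inclusion-induced functors: $i_k:\vec\pi_1(X_0,B_0)\to\vec\pi_1(X_k,B_k)$, $j_k:\vec\pi_1(X_k,B_k)\to\vec\pi_1(X,B)$, $i'_k:\vec\pi_1(X_0,A_0)\to\vec\pi_1(X_k,A_k)$, $j'_k:\vec\pi_1(X_k,A_k)\to\vec\pi_1(X,A)$ ($k=1,2$). Compatible future retracts $Q_k:\vec\pi_1(X_k)\to\vec\pi_1(X_k,B_k)$: each a future retract with unit $\theta^k$, commuting with the inclusion-induced functors from index $0$ to $k=1,2$, with $\theta^0_x$ mapping to $\theta^k_x$ for $x\in X_0$. Compatible future retracts $P_k:\vec\pi_1(X_k,B_k)\to\vec\pi_1(X_k,A_k)$: each a future retract with unit $\eta^k$, $P_k\circ i_k=i'_k\circ P_0$ ($k=1,2$), and $\eta^0_x$ mapping to $\eta^k_x$ for $x\in B_0$. *)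

(* d-spaces, directed homotopy, fundamental categories
   (represented via path representatives modulo the generated equivalence). *)
From Stdlib Require Import Reals Relations.
Open Scope R_scope.

Definition unit_I (t : R) : Prop := 0 <= t <= 1.

Definition cont_real (phi : R -> R) : Prop :=
  forall t, unit_I t -> forall e, 0 < e ->
    exists d, 0 < d /\ forall s, unit_I s -> Rabs (s - t) < d -> Rabs (phi s - phi t) < e.

Definition nondecr_map (phi : R -> R) : Prop :=
  cont_real phi /\ (forall t, unit_I t -> unit_I (phi t)) /\
  (forall s t, unit_I s -> unit_I t -> s <= t -> phi s <= phi t).

Definition path_cont {T : Type} (op : (T -> Prop) -> Prop) (g : R -> T) : Prop :=
  forall U t, op U -> unit_I t -> U (g t) ->
    exists e, 0 < e /\ forall s, unit_I s -> Rabs (s - t) < e -> U (g s).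

Definition square_cont {T : Type} (op : (T -> Prop) -> Prop) (H : R -> R -> T) : Prop :=
  forall U t s, op U -> unit_I t -> unit_I s -> U (H t s) ->
    exists e, 0 < e /\ forall t' s', unit_I t' -> unit_I s' ->
      Rabs (t' - t) < e -> Rabs (s' - s) < e -> U (H t' s').

Definition pconcat {T : Type} (g d : R -> T) : R -> T :=
  fun t => if Rle_dec t (1/2) then g (2 * t) else d (2 * t - 1).
Definition cst {T : Type} (x : T) : R -> T := fun _ => x.

Record dspace := {
  pt :> Type;
  is_open : (pt -> Prop) -> Prop;
  open_full : is_open (fun _ => True);
  open_inter : forall U V, is_open U -> is_open V -> is_open (fun x => U x /\ V x);
  open_union : forall (J : Type) (F : J -> pt -> Prop),
      (forall j, is_open (F j)) -> is_open (fun x => exists j, F j x);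
  dipath : (R -> pt) -> Prop;
  dipath_cont : forall g, dipath g -> path_cont is_open g;
  dipath_const : forall x, dipath (cst x);
  dipath_reparam : forall g phi d, dipath g -> nondecr_map phi ->
      (forall t, unit_I t -> d t = g (phi t)) -> dipath d;
  dipath_concat : forall g d, dipath g -> dipath d -> g 1 = d 0 -> dipath (pconcat g d)
}.

Section DS.
Variable X : dspace.

Definition dinterior (S : X -> Prop) (x : X) : Prop :=
  exists U, is_open X U /\ U x /\ forall y, U y -> S y.

Definition rel_interior (A S : X -> Prop) (x : X) : Prop :=
  A x /\ exists U, is_open X U /\ U x /\ forall y, U y -> A y -> S y.

Definition dipath_in (Y : X -> Prop) (g : R -> X) : Prop :=
  dipath X g /\ forall t, unit_I t -> Y (g t).

Definition piecewise (X1 X2 : X -> Prop) (g : R -> X) : Prop :=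
  exists (n : nat) (ts : nat -> R), ts 0%nat = 0 /\ ts n = 1 /\
    (forall i, (i < n)%nat -> ts i <= ts (S i)) /\
    forall i, (i < n)%nat ->
      let piece := fun s => g (ts i + s * (ts (S i) - ts i)) in
      dipath_in X1 piece \/ dipath_in X2 piece.

(* morphisms a -> b of the fundamental category of Y restricted to objects in A *)
Definition hom (Y A : X -> Prop) (a b : X) (g : R -> X) : Prop :=
  A a /\ A b /\ dipath_in Y g /\ g 0 = a /\ g 1 = b.

Definition dihomotopy (Y : X -> Prop) (g d : R -> X) : Prop :=
  exists H : R -> R -> X,
    square_cont (is_open X) H /\
    (forall t s, unit_I t -> unit_I s -> Y (H t s)) /\
    (forall p q, nondecr_map p -> nondecr_map q -> dipath X (fun u => H (p u) (q u))) /\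
    (forall s, unit_I s -> H 0 s = g 0 /\ H 1 s = g 1) /\
    (forall t, unit_I t -> H t 0 = g t /\ H t 1 = d t).

(* equality of morphisms in the fundamental category of Y *)
Definition homeq (Y : X -> Prop) : relation (R -> X) :=
  clos_refl_sym_trans _ (dihomotopy Y).

(* (Fo, Fm) is a functor  pi1(Y, B) -> pi1(Y', A')  (Fm acts on representatives) *)
Definition is_functor (Y B Y' A' : X -> Prop) (Fo : X -> X) (Fm : (R -> X) -> (R -> X)) : Prop :=
  (forall x, B x -> A' (Fo x)) /\
  (forall a b g, hom Y B a b g -> hom Y' A' (Fo a) (Fo b) (Fm g)) /\
  (forall a b g d, hom Y B a b g -> hom Y B a b d -> homeq Y g d -> homeq Y' (Fm g) (Fm d)) /\
  (forall a, B a -> homeq Y' (Fm (cst a)) (cst (Fo a))) /\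
  (forall a b c g d, hom Y B a b g -> hom Y B b c d ->
      homeq Y' (Fm (pconcat g d)) (pconcat (Fm g) (Fm d))).

(* future retract P : pi1(Y,B) -> pi1(Y,A), left adjoint to the inclusion,
   with unit eta (eta_x : x -> P x in pi1(Y,B)), eta_a = id_a for a in A.
   Composition "h o g" is pconcat g h. *)
Definition future_retract (Y B A : X -> Prop) (Po : X -> X) (Pm : (R -> X) -> (R -> X))
    (eta : X -> R -> X) : Prop :=
  is_functor Y B Y A Po Pm /\
  (forall x, B x -> hom Y B x (Po x) (eta x)) /\
  (forall x y g, hom Y B x y g -> homeq Y (pconcat g (eta y)) (pconcat (eta x) (Pm g))) /\
  (forall x a f, B x -> A a -> hom Y B x a f ->
     (exists h, hom Y A (Po x) a h /\ homeq Y (pconcat (eta x) h) f) /\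
     (forall h h', hom Y A (Po x) a h -> hom Y A (Po x) a h' ->
        homeq Y (pconcat (eta x) h) f -> homeq Y (pconcat (eta x) h') f -> homeq Y h h')) /\
  (forall a, A a -> Po a = a /\ homeq Y (eta a) (cst a)).

End DS.

Definition sel3 {T : Type} (k : nat) (t0 t1 t2 : T) : T :=
  match k with 0%nat => t0 | 1%nat => t1 | _ => t2 end.

(* A morphism g : x -> y of pi1(X, B) is a finite concatenation of
   dipaths lying in X1 or in X2, but its intermediate points need not lie in
   B, so the square eta ; g = P(g) ; eta cannot be checked piece by piece
   directly.  Instead every dipath gm : z -> w of X is shown to be "good":
   the units theta of the retractions Q_k : pi1(X_k) -> pi1(X_k, B_k) carry gm
   to a morphism c : Q z -> Q w of pi1(X, B) with gm ; theta_w = theta_z ; c,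
   and the eta-square already commutes for c.  Pieces inside one X_k are good
   (take c = Q_k(gm) and use the naturality of theta_k, of eta_k and the
   agreement of the retractions on X0); good paths compose (functoriality of
   P); goodness is invariant under equality of morphisms.  For g itself, x and
   y lie in B, where theta is the identity, hence g = c and we are done. *)
From Pilot Require Import Defs.
From Stdlib Require Import Reals Relations Lra Lia Ranalysis5.
Open Scope R_scope.

Definition lip (L : R) (f : R -> R) : Prop :=
  0 <= L /\ forall s t, Rabs (f s - f t) <= L * Rabs (s - t).

(* Every
   reparametrisation built in this file is of this kind; Lipschitz bounds
   make continuity of composites and of two-parameter families easy. *)
Definition lmap (L : R) (f : R -> R) : Prop :=
  lip L f /\ (forall t, unit_I t -> unit_I (f t)) /\
  (forall s t, unit_I s -> unit_I t -> s <= t -> f s <= f t).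

Lemma lip_small (L a b e : R) : 0 <= L -> 0 < e -> Rabs a <= L * Rabs b ->
  Rabs b < e / (L + 1) -> Rabs a < e.
Proof.
  intros HL He Hab Hb. assert (0 <= Rabs b) by apply Rabs_pos.
  assert (E : e = (L + 1) * (e / (L + 1))) by (field; lra).
  rewrite E. nra.
Qed.

Lemma lip_cont (L : R) (f : R -> R) : lip L f -> cont_real f.
Proof.
  intros [HL Hf] t _ e He. exists (e / (L + 1)).
  split; [apply Rdiv_lt_0_compat; lra|].
  intros s _ Hs. eapply lip_small; eauto.
Qed.

Lemma lmap_nondecr (L : R) (f : R -> R) : lmap L f -> nondecr_map f.
Proof. intros [H1 [H2 H3]]. split; [eapply lip_cont; eauto | auto]. Qed.

Lemma lip_weaken (L L' : R) (f : R -> R) : lip L f -> L <= L' -> lip L' f.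
Proof.
  intros [H0 H] HL. split; [lra|]. intros s t. eapply Rle_trans; [apply H|].
  apply Rmult_le_compat_r; [apply Rabs_pos| lra].
Qed.

Lemma lip_aff (a b : R) : lip (Rabs b) (fun t => a + b * t).
Proof.
  split; [apply Rabs_pos|]. intros s t.
  replace (a + b * s - (a + b * t)) with (b * (s - t)) by ring.
  rewrite Rabs_mult. lra.
Qed.

Lemma lip_piece (L c : R) (f1 f2 : R -> R) : lip L f1 -> lip L f2 -> f1 c = f2 c ->
  lip L (fun t => if Rle_dec t c then f1 t else f2 t).
Proof.
  intros [H0 H1] [_ H2] E. split; auto. intros s t.
  destruct (Rle_dec s c); destruct (Rle_dec t c); auto.
  - replace (f1 s - f2 t) with ((f1 s - f1 c) + (f2 c - f2 t)) by (rewrite E; ring).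
    eapply Rle_trans; [apply Rabs_triang|].
    pose proof (H1 s c); pose proof (H2 c t).
    rewrite (Rabs_left1 (s - c)) in * by lra.
    rewrite (Rabs_left1 (c - t)) in * by lra.
    rewrite (Rabs_left1 (s - t)) by lra. nra.
  - replace (f2 s - f1 t) with ((f2 s - f2 c) + (f1 c - f1 t)) by (rewrite E; ring).
    eapply Rle_trans; [apply Rabs_triang|].
    pose proof (H2 s c); pose proof (H1 c t).
    rewrite (Rabs_right (s - c)) in * by lra.
    rewrite (Rabs_right (c - t)) in * by lra.
    rewrite (Rabs_right (s - t)) by lra. nra.
Qed.

Lemma lip_ext (L : R) (f g : R -> R) : lip L f -> (forall t, f t = g t) -> lip L g.
Proof. intros [H0 H] E. split; auto. intros s t. rewrite <- !E. apply H. Qed.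

Lemma lip_double (L a : R) (f : R -> R) : lip L f -> lip (2 * L) (fun t => f (2 * t - a)).
Proof.
  intros [H0 H]. split; [lra|]. intros s t. eapply Rle_trans; [apply H|].
  replace (2 * s - a - (2 * t - a)) with (2 * (s - t)) by ring.
  rewrite Rabs_mult, (Rabs_right 2) by lra. lra.
Qed.

Lemma lmap_pconcat (L : R) (f1 f2 : R -> R) : lmap L f1 -> lmap L f2 -> f1 1 = f2 0 ->
  lmap (2 * L) (pconcat f1 f2).
Proof.
  intros [L1 [I1 M1]] [L2 [I2 M2]] E. split; [|split].
  - apply lip_piece.
    + apply (lip_ext _ _ _ (lip_double L 0 f1 L1)). intros t. f_equal; ring.
    + apply lip_double; exact L2.
    + replace (2 * (1/2)) with 1 by field. replace (1 - 1) with 0 by ring. exact E.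
  - unfold pconcat, unit_I in *. intros t Ht.
    destruct (Rle_dec t (1/2)); [apply I1| apply I2]; lra.
  - unfold pconcat, unit_I in *. intros s t Hs Ht Hst.
    destruct (Rle_dec s (1/2)); destruct (Rle_dec t (1/2)).
    + apply M1; lra.
    + apply Rle_trans with (f1 1); [apply M1; lra|]. rewrite E. apply M2; lra.
    + lra.
    + apply M2; lra.
Qed.

Lemma lmap_aff (a b : R) : 0 <= a -> 0 <= b -> a + b <= 1 -> lmap (Rabs b) (fun t => a + b * t).
Proof.
  intros. split; [apply lip_aff|]. unfold unit_I. split.
  - intros t Ht. split; nra.
  - intros. nra.
Qed.

Lemma lmap_const (c : R) : unit_I c -> lmap 0 (fun _ => c).
Proof.
  intros H. split; [|split; auto; intros; lra].
  split; [lra|]. intros. unfold Rminus. rewrite Rplus_opp_r, Rabs_R0. lra.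
Qed.

Lemma lmap_id : lmap 1 (fun t => t).
Proof.
  split; [split; [lra| intros; lra]|]. split; auto.
Qed.

Lemma lmap_weaken (L L' : R) (f : R -> R) : lmap L f -> L <= L' -> lmap L' f.
Proof. intros [H1 H2] H. split; auto. eapply lip_weaken; eauto. Qed.

Lemma cont_lip_after (L : R) (f p : R -> R) : lip L f -> cont_real p -> cont_real (fun u => f (p u)).
Proof.
  intros [H0 Hf] Hp t Ht e He.
  destruct (Hp t Ht (e / (L + 1))) as [d [Hd Hd']]; [apply Rdiv_lt_0_compat; lra|].
  exists d; split; auto. intros s Hs Hst.
  eapply lip_small; [exact H0| exact He| apply Hf| apply Hd'; auto].
Qed.

Lemma cont_lip_before (L : R) (f p : R -> R) : lip L f -> (forall t, unit_I t -> unit_I (f t)) ->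
  cont_real p -> cont_real (fun u => p (f u)).
Proof.
  intros [H0 Hf] HI Hp t Ht e He.
  destruct (Hp (f t) (HI t Ht) e He) as [d [Hd Hd']].
  exists (d / (L + 1)). split; [apply Rdiv_lt_0_compat; lra|].
  intros s Hs Hst. apply Hd'; auto. eapply lip_small; eauto.
Qed.

Lemma nondecr_comp (L : R) (p f : R -> R) : nondecr_map p -> lmap L f ->
  nondecr_map (fun u => p (f u)).
Proof.
  intros [Cp [Ip Mp]] [Lf [If Mf]]. split; [eapply cont_lip_before; eauto|split].
  - intros u Hu. apply Ip, If, Hu.
  - intros s t Hs Ht Hst. apply Mp; auto.
Qed.

Lemma nondecr_aff (a b : R) (p : R -> R) : nondecr_map p -> 0 <= b ->
  (forall u, unit_I u -> unit_I (a + b * p u)) -> nondecr_map (fun u => a + b * p u).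
Proof.
  intros [Cp [Ip Mp]] Hb HI. split; [|split; auto].
  - apply (cont_lip_after (Rabs b) (fun x => a + b * x) p); [apply lip_aff| exact Cp].
  - intros s t Hs Ht Hst. assert (p s <= p t) by (apply Mp; auto). nra.
Qed.

Definition lip2 (L : R) (sg : R -> R -> R) : Prop :=
  0 <= L /\ forall t s t' s', Rabs (sg t' s' - sg t s) <= L * (Rabs (t' - t) + Rabs (s' - s)).

Lemma cont_lip2 (L : R) (sg : R -> R -> R) (p q : R -> R) : lip2 L sg -> cont_real p -> cont_real q ->
  cont_real (fun u => sg (p u) (q u)).
Proof.
  intros [H0 Hs] Hp Hq t Ht e He.
  set (e' := e / (2 * (L + 1))).
  assert (He' : 0 < e') by (unfold e'; apply Rdiv_lt_0_compat; lra).
  destruct (Hp t Ht e' He') as [d1 [Hd1 Hd1']].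
  destruct (Hq t Ht e' He') as [d2 [Hd2 Hd2']].
  exists (Rmin d1 d2). split; [apply Rmin_pos; auto|].
  intros s Hs' Hst.
  assert (A1 := Hd1' s Hs' (Rlt_le_trans _ _ _ Hst (Rmin_l _ _))).
  assert (A2 := Hd2' s Hs' (Rlt_le_trans _ _ _ Hst (Rmin_r _ _))).
  eapply Rle_lt_trans; [apply Hs|].
  assert (E : e = 2 * (L+1) * e') by (unfold e'; field; lra).
  rewrite E. nra.
Qed.

Lemma Rmin_lip (a b a' b' : R) : Rabs (Rmin a b - Rmin a' b') <= Rabs (a - a') + Rabs (b - b').
Proof.
  unfold Rmin. destruct (Rle_dec a b); destruct (Rle_dec a' b');
  unfold Rabs; repeat destruct Rcase_abs; lra.
Qed.

Lemma Rmax_lip (a b a' b' : R) : Rabs (Rmax a b - Rmax a' b') <= Rabs (a - a') + Rabs (b - b').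
Proof.
  unfold Rmax. destruct (Rle_dec a b); destruct (Rle_dec a' b');
  unfold Rabs; repeat destruct Rcase_abs; lra.
Qed.

(* Intermediate value theorem on [0,1] for the continuity notion of Defs;
   reduced to the Stdlib version by clamping the argument to [0,1]. *)
Definition clamp (t : R) : R := Rmax 0 (Rmin 1 t).

Lemma clamp_id (t : R) : 0 <= t <= 1 -> clamp t = t.
Proof. intros. unfold clamp, Rmax, Rmin; repeat destruct Rle_dec; lra. Qed.

Lemma ivt_I (p : R -> R) (v : R) : cont_real p -> p 0 < v -> v < p 1 ->
  exists c, 0 <= c <= 1 /\ p c = v.
Proof.
  intros Hp H0 H1.
  set (f := fun t => p (clamp t) - v).
  assert (C : forall a, 0 <= a <= 1 -> continuity_pt f a).
  { intros a Ha. unfold continuity_pt, continue_in, limit1_in, limit_in. simpl.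
    unfold Rdist. intros eps Heps.
    destruct (Hp a Ha eps Heps) as [d [Hd Hd']].
    exists d. split; auto. intros x [_ Hx].
    unfold f. rewrite (clamp_id a Ha).
    replace (p (clamp x) - v - (p a - v)) with (p (clamp x) - p a) by ring.
    apply Hd'.
    - unfold unit_I, clamp, Rmax, Rmin; repeat destruct Rle_dec; lra.
    - eapply Rle_lt_trans; [|apply Hx]. unfold clamp, Rmax, Rmin.
      unfold Rabs; repeat destruct Rle_dec; repeat destruct Rcase_abs; lra. }
  destruct (IVT_interv f 0 1 C) as [c [Hc Hfc]]; [lra| | |].
  - unfold f. rewrite clamp_id by lra. lra.
  - unfold f. rewrite clamp_id by lra. lra.
  - exists c. split; auto. unfold f in Hfc. rewrite clamp_id in Hfc by lra. lra.
Qed.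

Lemma pconcat_0 {T : Type} (g d : R -> T) : pconcat g d 0 = g 0.
Proof. unfold pconcat. destruct (Rle_dec 0 (1/2)); [|lra]. f_equal; ring. Qed.

Lemma pconcat_1 {T : Type} (g d : R -> T) : pconcat g d 1 = d 1.
Proof. unfold pconcat. destruct (Rle_dec 1 (1/2)); [lra|]. f_equal; ring. Qed.

Lemma dipath_ext (X : dspace) (f g : R -> X) : dipath X f -> (forall t, unit_I t -> g t = f t) ->
  dipath X g.
Proof. intros Hf E. exact (dipath_reparam X f _ g Hf (lmap_nondecr _ _ lmap_id) E). Qed.

Lemma dipath_in_concat (X : dspace) (Y : X -> Prop) (g d : R -> X) :
  dipath_in X Y g -> dipath_in X Y d -> g 1 = d 0 -> dipath_in X Y (pconcat g d).
Proof.
  intros [Hg Yg] [Hd Yd] E. split; [apply dipath_concat; auto|].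
  intros t Ht. unfold pconcat, unit_I in *. destruct (Rle_dec t (1/2));
  [apply Yg|apply Yd]; unfold unit_I; lra.
Qed.

(* A path whose restrictions to [0,c] and [c,1] are dipaths is a dipath:
   it is a monotone reparametrisation of the concatenation of the two pieces. *)
Lemma dipath_cut (X : dspace) (g : R -> X) (c : R) : 0 < c < 1 ->
  dipath X (fun s => g (c * s)) -> dipath X (fun s => g (c + (1 - c) * s)) -> dipath X g.
Proof.
  intros Hc D1 D2.
  set (i1 := / (2 * c)). set (i2 := / (2 * (1 - c))).
  assert (Hi1 : i1 * (2 * c) = 1) by (unfold i1; field; lra).
  assert (Hi2 : i2 * (2 * (1 - c)) = 1) by (unfold i2; field; lra).
  assert (P1 : 0 < i1) by (unfold i1; apply Rinv_0_lt_compat; lra).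
  assert (P2 : 0 < i2) by (unfold i2; apply Rinv_0_lt_compat; lra).
  set (a := 1/2 - i2 * c).
  set (phi := fun t => if Rle_dec t c then 0 + i1 * t else a + i2 * t).
  apply (dipath_reparam X (pconcat (fun s => g (c * s)) (fun s => g (c + (1 - c) * s))) phi).
  - apply dipath_concat; auto. f_equal; ring.
  - apply (lmap_nondecr (i1 + i2)). split; [|split].
    + apply lip_piece.
      * eapply lip_weaken; [apply lip_aff|]. rewrite Rabs_right; lra.
      * eapply lip_weaken; [apply lip_aff|]. rewrite Rabs_right; lra.
      * unfold a. nra.
    + intros t Ht. unfold phi, unit_I in *. destruct (Rle_dec t c); unfold a; nra.
    + intros s t Hs Ht Hst. unfold phi, unit_I in *.
      destruct (Rle_dec s c); destruct (Rle_dec t c); unfold a; nra.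
  - intros t Ht. unfold phi, pconcat. unfold unit_I in Ht. destruct (Rle_dec t c).
    + destruct (Rle_dec (0 + i1 * t) (1/2)); [|exfalso; nra].
      f_equal. replace (c * (2 * (0 + i1 * t))) with ((i1 * (2 * c)) * t) by ring.
      rewrite Hi1; ring.
    + destruct (Rle_dec (a + i2 * t) (1/2)); [exfalso; unfold a in *; nra|].
      f_equal. unfold a.
      replace (c + (1 - c) * (2 * (1 / 2 - i2 * c + i2 * t) - 1))
        with (c + (i2 * (2 * (1 - c))) * (t - c)) by field.
      rewrite Hi2; ring.
Qed.

Definition dmap2 (X : dspace) (H : R -> R -> X) : Prop :=
  forall p q, nondecr_map p -> nondecr_map q -> dipath X (fun u => H (p u) (q u)).

Lemma square_cont_reparam (X : dspace) (g : R -> X) (sg : R -> R -> R) (L : R) :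
  path_cont (is_open X) g -> lip2 L sg ->
  (forall t s, unit_I t -> unit_I s -> unit_I (sg t s)) ->
  square_cont (is_open X) (fun t s => g (sg t s)).
Proof.
  intros Hg [H0 Hs] HI U t s HU Ht Hs' HUx.
  destruct (Hg U (sg t s) HU (HI t s Ht Hs') HUx) as [e [He He']].
  exists (e / (2 * (L + 1))). split; [apply Rdiv_lt_0_compat; lra|].
  intros t' s' Ht' Hs'' H1 H2. apply He'; [auto|].
  eapply Rle_lt_trans; [apply Hs|].
  assert (E : e = 2 * (L+1) * (e / (2 * (L + 1)))) by (field; lra).
  rewrite E. set (k := e / (2 * (L + 1))) in *.
  assert (0 <= Rabs (t' - t)) by apply Rabs_pos.
  assert (0 <= Rabs (s' - s)) by apply Rabs_pos. nra.
Qed.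

Lemma dihom_reparam (X : dspace) (Y : X -> Prop) (g d1 d2 : R -> X) (sg : R -> R -> R) (L : R) :
  dipath_in X Y g -> lip2 L sg ->
  (forall t s, unit_I t -> unit_I s -> unit_I (sg t s)) ->
  (forall t t' s s', unit_I t -> unit_I t' -> unit_I s -> unit_I s' -> t <= t' -> s <= s' ->
      sg t s <= sg t' s') ->
  (forall s, unit_I s -> g (sg 0 s) = d1 0 /\ g (sg 1 s) = d1 1) ->
  (forall t, unit_I t -> g (sg t 0) = d1 t /\ g (sg t 1) = d2 t) ->
  dihomotopy X Y d1 d2.
Proof.
  intros [Hg HY] HL HI HM Hb He.
  exists (fun t s => g (sg t s)). split; [|split; [|split]].
  - eapply square_cont_reparam; eauto. apply dipath_cont; auto.
  - intros t s Ht Hs. apply HY, HI; auto.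
  - intros p q [Cp [Ip Mp]] [Cq [Iq Mq]].
    apply (dipath_reparam X g (fun u => sg (p u) (q u))); auto.
    split; [eapply cont_lip2; eauto| split].
    + intros t Ht. apply HI; auto.
    + intros s t Hs Ht Hst. apply HM; auto.
  - split; auto.
Qed.

Lemma dihom_refl (X : dspace) (Y : X -> Prop) (g : R -> X) : dipath_in X Y g -> dihomotopy X Y g g.
Proof.
  intros H. apply (dihom_reparam X Y g g g (fun t s => t) 1); auto.
  split; [lra|]. intros. assert (0 <= Rabs (s' - s)) by apply Rabs_pos. lra.
Qed.

(* The reparametrisation g o phi is dihomotopic to g o max(phi, psi), through
   s |-> g o min(max(phi, psi), phi + s). *)
Lemma dihom_to_max (X : dspace) (Y : X -> Prop) (g d m : R -> X) (phi psi : R -> R) (L1 L2 : R) :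
  dipath_in X Y g -> lmap L1 phi -> lmap L2 psi -> phi 0 = psi 0 -> phi 1 = psi 1 ->
  (forall t, unit_I t -> d t = g (phi t)) ->
  (forall t, unit_I t -> m t = g (Rmax (phi t) (psi t))) ->
  dihomotopy X Y d m.
Proof.
  intros Hg [[L1p Lp] [Ip Mp]] [[L2p Lq] [Iq Mq]] E0 E1 Ed Em.
  assert (U0 : unit_I 0) by (unfold unit_I; lra).
  assert (U1 : unit_I 1) by (unfold unit_I; lra).
  apply (dihom_reparam X Y g d m (fun t s => Rmin (Rmax (phi t) (psi t)) (phi t + s))
           (2 * L1 + L2 + 1)); auto.
  - split; [lra|]. intros t s t' s'.
    eapply Rle_trans; [apply Rmin_lip|].
    pose proof (Rmax_lip (phi t') (psi t') (phi t) (psi t)).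
    pose proof (Lp t' t). pose proof (Lq t' t).
    replace (phi t' + s' - (phi t + s)) with ((phi t' - phi t) + (s' - s)) by ring.
    pose proof (Rabs_triang (phi t' - phi t) (s' - s)).
    assert (0 <= Rabs (t' - t)) by apply Rabs_pos.
    assert (0 <= Rabs (s' - s)) by apply Rabs_pos. nra.
  - intros t s Ht Hs. specialize (Ip t Ht); specialize (Iq t Ht). unfold unit_I in *.
    unfold Rmin, Rmax; repeat destruct Rle_dec; lra.
  - intros t t' s s' Ht Ht' Hs Hs' H1 H2.
    pose proof (Mp t t' Ht Ht' H1). pose proof (Mq t t' Ht Ht' H1).
    unfold Rmin, Rmax; repeat destruct Rle_dec; lra.
  - intros s Hs. unfold unit_I in Hs.
    rewrite !Ed by auto. split; f_equal; unfold Rmin, Rmax; repeat destruct Rle_dec; lra.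
  - intros t Ht. rewrite Ed, Em by auto. specialize (Ip t Ht); specialize (Iq t Ht).
    unfold unit_I in *. split; f_equal; unfold Rmin, Rmax; repeat destruct Rle_dec; lra.
Qed.

(* Two Lipschitz reparametrisations of one dipath with the same endpoints
   define the same morphism (both are homotopic to the one along the max). *)
Lemma reparam_homeq (X : dspace) (Y : X -> Prop) (g d1 d2 : R -> X) (phi psi : R -> R) (L1 L2 : R) :
  dipath_in X Y g -> lmap L1 phi -> lmap L2 psi -> phi 0 = psi 0 -> phi 1 = psi 1 ->
  (forall t, unit_I t -> d1 t = g (phi t)) ->
  (forall t, unit_I t -> d2 t = g (psi t)) ->
  homeq X Y d1 d2.
Proof.
  intros Hg Hp Hq E0 E1 D1 D2.
  set (m := fun t => g (Rmax (phi t) (psi t))).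
  apply rst_trans with m.
  - apply rst_step. eapply (dihom_to_max X Y g d1 m phi psi); eauto.
  - apply rst_sym, rst_step. eapply (dihom_to_max X Y g d2 m psi phi); eauto.
    intros t Ht. unfold m. rewrite Rmax_comm. auto.
Qed.

Definition glue {T : Type} (H1 H2 : R -> R -> T) : R -> R -> T :=
  fun t s => if Rle_dec t (1/2) then H1 (2 * t) s else H2 (2 * t - 1) s.

Lemma glue_square_cont (X : dspace) (H1 H2 : R -> R -> X) :
  square_cont (is_open X) H1 -> square_cont (is_open X) H2 ->
  (forall s, unit_I s -> H1 1 s = H2 0 s) -> square_cont (is_open X) (glue H1 H2).
Proof.
  intros C1 C2 J U t s HU Ht Hs HK. unfold glue in HK.
  assert (U0 : unit_I 0) by (unfold unit_I; lra).
  assert (U1 : unit_I 1) by (unfold unit_I; lra).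
  destruct (Rtotal_order t (1/2)) as [Hlt|[Heq|Hgt]].
  - destruct (Rle_dec t (1/2)); [|lra].
    assert (I2 : unit_I (2 * t)) by (unfold unit_I in *; lra).
    destruct (C1 U (2 * t) s HU I2 Hs HK) as [e [He He']].
    exists (Rmin (e / 2) (1/2 - t)). split; [apply Rmin_pos; lra|].
    intros t' s' Ht' Hs' A1 A2. unfold glue.
    pose proof (Rmin_l (e/2) (1/2 - t)). pose proof (Rmin_r (e/2) (1/2 - t)).
    destruct (Rabs_def2 _ _ A1). destruct (Rabs_def2 _ _ A2).
    destruct (Rle_dec t' (1/2)); [|lra].
    apply He'; unfold unit_I in *; try lra; apply Rabs_def1; lra.
  - subst t. destruct (Rle_dec (1/2) (1/2)); [|lra].
    replace (2 * (1/2)) with 1 in HK by field.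
    assert (HK2 : U (H2 0 s)) by (rewrite <- J; auto).
    destruct (C1 U 1 s HU U1 Hs HK) as [e1 [He1 He1']].
    destruct (C2 U 0 s HU U0 Hs HK2) as [e2 [He2 He2']].
    exists (Rmin e1 e2 / 2). split; [pose proof (Rmin_pos e1 e2 He1 He2); lra|].
    intros t' s' Ht' Hs' A1 A2. unfold glue.
    pose proof (Rmin_l e1 e2). pose proof (Rmin_r e1 e2).
    destruct (Rabs_def2 _ _ A1). destruct (Rabs_def2 _ _ A2).
    destruct (Rle_dec t' (1/2)).
    + apply He1'; unfold unit_I in *; try lra; apply Rabs_def1; lra.
    + apply He2'; unfold unit_I in *; try lra; apply Rabs_def1; lra.
  - destruct (Rle_dec t (1/2)); [lra|].
    assert (I2 : unit_I (2 * t - 1)) by (unfold unit_I in *; lra).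
    destruct (C2 U (2 * t - 1) s HU I2 Hs HK) as [e [He He']].
    exists (Rmin (e / 2) (t - 1/2)). split; [apply Rmin_pos; lra|].
    intros t' s' Ht' Hs' A1 A2. unfold glue.
    pose proof (Rmin_l (e/2) (t - 1/2)). pose proof (Rmin_r (e/2) (t - 1/2)).
    destruct (Rabs_def2 _ _ A1). destruct (Rabs_def2 _ _ A2).
    destruct (Rle_dec t' (1/2)); [lra|].
    apply He'; unfold unit_I in *; try lra; apply Rabs_def1; lra.
Qed.

(* The glued map is a d-map: a monotone path (p, q) of the square is cut at
   the parameter c where p crosses 1/2 (intermediate value theorem), and each
   half is a rescaled monotone path in the square of H1 or of H2. *)
Lemma glue_dmap2 (X : dspace) (H1 H2 : R -> R -> X) : dmap2 X H1 -> dmap2 X H2 ->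
  (forall s, unit_I s -> H1 1 s = H2 0 s) -> dmap2 X (glue H1 H2).
Proof.
  intros D1 D2 J p q Hp Hq.
  pose proof Hp as [Cp [Ip Mp]]. pose proof Hq as [_ [Iq _]].
  assert (Left : forall L f, lmap L f -> (forall u, unit_I u -> p (f u) <= 1/2) ->
            dipath X (fun u => glue H1 H2 (p (f u)) (q (f u)))).
  { intros L f Hf Hle. pose proof Hf as [_ [If _]].
    apply dipath_ext with (fun u => H1 (0 + 2 * p (f u)) (q (f u))).
    - apply D1; [|eapply nondecr_comp; eauto].
      apply nondecr_aff; [eapply nondecr_comp; eauto| lra|].
      intros u Hu. specialize (Hle u Hu). specialize (Ip _ (If u Hu)). unfold unit_I in *; lra.
    - intros u Hu. unfold glue. specialize (Hle u Hu).
      destruct Rle_dec; [f_equal; ring| lra]. }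
  assert (Right : forall L f, lmap L f -> (forall u, unit_I u -> 1/2 <= p (f u)) ->
            dipath X (fun u => glue H1 H2 (p (f u)) (q (f u)))).
  { intros L f Hf Hge. pose proof Hf as [_ [If _]].
    apply dipath_ext with (fun u => H2 (-1 + 2 * p (f u)) (q (f u))).
    - apply D2; [|eapply nondecr_comp; eauto].
      apply nondecr_aff; [eapply nondecr_comp; eauto| lra|].
      intros u Hu. specialize (Hge u Hu). specialize (Ip _ (If u Hu)). unfold unit_I in *; lra.
    - intros u Hu. unfold glue. specialize (Hge u Hu). destruct Rle_dec.
      + replace (p (f u)) with (1/2) by lra. replace (2 * (1/2)) with 1 by field.
        replace (-1 + 1) with 0 by ring. apply J, Iq, If, Hu.
      + f_equal; ring. }
  destruct (Rle_dec (p 1) (1/2)) as [Ha|Ha].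
  { apply (Left _ _ lmap_id). intros u Hu.
    apply Rle_trans with (p 1); [apply Mp; unfold unit_I in *; auto; lra| exact Ha]. }
  destruct (Rle_dec (1/2) (p 0)) as [Hb|Hb].
  { apply (Right _ _ lmap_id). intros u Hu.
    apply Rle_trans with (p 0); [exact Hb| apply Mp; unfold unit_I in *; auto; lra]. }
  destruct (ivt_I p (1/2) Cp) as [c [Hc Hpc]]; try lra.
  assert (Hc' : 0 < c < 1).
  { split; destruct (Req_dec c 0); destruct (Req_dec c 1); subst; lra. }
  apply (dipath_cut X _ c Hc').
  - apply dipath_ext with (fun u => glue H1 H2 (p (0 + c * u)) (q (0 + c * u))).
    + apply (Left _ _ (lmap_aff 0 c ltac:(lra) ltac:(lra) ltac:(lra))).
      intros u Hu. rewrite <- Hpc. apply Mp; unfold unit_I in *; nra.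
    + intros u Hu. replace (0 + c * u) with (c * u) by ring. reflexivity.
  - apply (Right _ _ (lmap_aff c (1 - c) ltac:(lra) ltac:(lra) ltac:(lra))).
    intros u Hu. rewrite <- Hpc. apply Mp; unfold unit_I in *; nra.
Qed.

Lemma dihom_concat (X : dspace) (Y : X -> Prop) (g g' d d' : R -> X) :
  dihomotopy X Y g g' -> dihomotopy X Y d d' -> g 1 = d 0 ->
  dihomotopy X Y (pconcat g d) (pconcat g' d').
Proof.
  intros [H1 [C1 [Y1 [DM1 [B1 E1]]]]] [H2 [C2 [Y2 [DM2 [B2 E2]]]]] Egd.
  assert (J : forall s, unit_I s -> H1 1 s = H2 0 s).
  { intros s Hs. rewrite (proj2 (B1 s Hs)), (proj1 (B2 s Hs)). auto. }
  exists (glue H1 H2). split; [|split; [|split; [|split]]].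
  - apply glue_square_cont; auto.
  - intros t s Ht Hs. unfold glue, unit_I in *.
    destruct (Rle_dec t (1/2)); [apply Y1|apply Y2]; unfold unit_I; auto; lra.
  - apply glue_dmap2; auto.
  - intros s Hs. rewrite pconcat_0, pconcat_1. unfold glue.
    destruct (Rle_dec 0 (1/2)); [|lra]. destruct (Rle_dec 1 (1/2)); [lra|].
    replace (2 * 0) with 0 by ring. replace (2 * 1 - 1) with 1 by ring.
    split; [apply B1| apply B2]; auto.
  - intros t Ht. unfold glue, pconcat, unit_I in *.
    destruct (Rle_dec t (1/2)); [apply E1| apply E2]; unfold unit_I; lra.
Qed.

Lemma dihom_endpoints (X : dspace) (Y : X -> Prop) (a b : R -> X) :
  dihomotopy X Y a b -> a 0 = b 0 /\ a 1 = b 1.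
Proof.
  intros [H [_ [_ [_ [B E]]]]].
  assert (U0 : unit_I 0) by (unfold unit_I; lra).
  assert (U1 : unit_I 1) by (unfold unit_I; lra).
  destruct (B 1 U1) as [B0 B1]. destruct (E 0 U0) as [_ E0]. destruct (E 1 U1) as [_ E1].
  split; congruence.
Qed.

Lemma homeq_endpoints (X : dspace) (Y : X -> Prop) (a b : R -> X) :
  homeq X Y a b -> a 0 = b 0 /\ a 1 = b 1.
Proof.
  induction 1 as [a b H| a| a b _ [E0 E1]| a b c _ [E0 E1] _ [F0 F1]].
  - exact (dihom_endpoints X Y a b H).
  - auto.
  - auto.
  - split; congruence.
Qed.

Lemma homeq_widen (X : dspace) (Y Y' : X -> Prop) (a b : R -> X) : (forall x, Y x -> Y' x) ->
  homeq X Y a b -> homeq X Y' a b.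
Proof.
  intros S. induction 1.
  - apply rst_step. destruct H as [H [C [Hy Rest]]]. exists H. split; auto.
  - apply rst_refl.
  - apply rst_sym; auto.
  - eapply rst_trans; eauto.
Qed.

Lemma homeq_whisker_r (X : dspace) (Y : X -> Prop) (g g' d : R -> X) :
  homeq X Y g g' -> dipath_in X Y d -> g 1 = d 0 -> homeq X Y (pconcat g d) (pconcat g' d).
Proof.
  intros H Hd. induction H; intros E.
  - apply rst_step. apply dihom_concat; auto. apply dihom_refl; auto.
  - apply rst_refl.
  - apply rst_sym. apply IHclos_refl_sym_trans.
    destruct (homeq_endpoints X Y _ _ H). congruence.
  - eapply rst_trans; [apply IHclos_refl_sym_trans1; auto|].
    apply IHclos_refl_sym_trans2. destruct (homeq_endpoints X Y _ _ H). congruence.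
Qed.

Lemma homeq_whisker_l (X : dspace) (Y : X -> Prop) (g d d' : R -> X) :
  homeq X Y d d' -> dipath_in X Y g -> g 1 = d 0 -> homeq X Y (pconcat g d) (pconcat g d').
Proof.
  intros H Hg. induction H; intros E.
  - apply rst_step. apply dihom_concat; auto. apply dihom_refl; auto.
  - apply rst_refl.
  - apply rst_sym. apply IHclos_refl_sym_trans.
    destruct (homeq_endpoints X Y _ _ H). congruence.
  - eapply rst_trans; [apply IHclos_refl_sym_trans1; auto|].
    apply IHclos_refl_sym_trans2. destruct (homeq_endpoints X Y _ _ H). congruence.
Qed.

Definition whole (X : dspace) : X -> Prop := fun _ => True.

Definition mor (X : dspace) (a b : X) (g : R -> X) : Prop :=
  dipath_in X (whole X) g /\ g 0 = a /\ g 1 = b.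

Lemma mor_src {X : dspace} {a b : X} {g : R -> X} : mor X a b g -> g 0 = a.
Proof. intros [_ [E _]]. exact E. Qed.

Lemma mor_tgt {X : dspace} {a b : X} {g : R -> X} : mor X a b g -> g 1 = b.
Proof. intros [_ [_ E]]. exact E. Qed.

Lemma hom_mor (X : dspace) (Y B : X -> Prop) (a b : X) (g : R -> X) :
  hom X Y B a b g -> mor X a b g.
Proof. intros [_ [_ [[Hg _] [E0 E1]]]]. split; [split; auto; intros; exact I| auto]. Qed.

Lemma homeq_whole (X : dspace) (Y : X -> Prop) (a b : R -> X) :
  homeq X Y a b -> homeq X (whole X) a b.
Proof. apply homeq_widen. intros; exact I. Qed.

Lemma mor_concat (X : dspace) (a b c : X) (g d : R -> X) :
  mor X a b g -> mor X b c d -> mor X a c (pconcat g d).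
Proof.
  intros [Hg [G0 G1]] [Hd [D0 D1]]. split; [apply dipath_in_concat; auto; congruence|].
  rewrite pconcat_0, pconcat_1. auto.
Qed.

Lemma cong_l (X : dspace) (b c : X) (g g' d : R -> X) :
  homeq X (whole X) g g' -> mor X b c d -> g 1 = b ->
  homeq X (whole X) (pconcat g d) (pconcat g' d).
Proof. intros H [Hd [D0 _]] E. apply homeq_whisker_r; auto. congruence. Qed.

Lemma cong_r (X : dspace) (a b : X) (g d d' : R -> X) :
  homeq X (whole X) d d' -> mor X a b g -> d 0 = b ->
  homeq X (whole X) (pconcat g d) (pconcat g d').
Proof. intros H [Hg [_ G1]] E. apply homeq_whisker_l; auto. congruence. Qed.

(* Category laws of pi1(X): all are instances of reparam_homeq. *)
Lemma unit_l (X : dspace) (a b : X) (f : R -> X) :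
  mor X a b f -> homeq X (whole X) (pconcat (cst a) f) f.
Proof.
  intros [Hf [F0 F1]]. apply rst_sym.
  apply (reparam_homeq X (whole X) f f _ (fun u => u)
           (pconcat (fun _ => 0) (fun u => u)) 1 (2*1) Hf lmap_id).
  - apply lmap_pconcat; [eapply lmap_weaken; [apply lmap_const; unfold unit_I; lra| lra]
                        | apply lmap_id | reflexivity].
  - rewrite pconcat_0. reflexivity.
  - rewrite pconcat_1. reflexivity.
  - reflexivity.
  - intros t Ht. unfold pconcat, cst. destruct (Rle_dec t (1/2)); congruence.
Qed.

Lemma unit_r (X : dspace) (a b : X) (f : R -> X) :
  mor X a b f -> homeq X (whole X) (pconcat f (cst b)) f.
Proof.
  intros [Hf [F0 F1]]. apply rst_sym.
  apply (reparam_homeq X (whole X) f f _ (fun u => u)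
           (pconcat (fun u => u) (fun _ => 1)) 1 (2*1) Hf lmap_id).
  - apply lmap_pconcat; [apply lmap_id |
       eapply lmap_weaken; [apply lmap_const; unfold unit_I; lra| lra] | reflexivity].
  - rewrite pconcat_0. reflexivity.
  - rewrite pconcat_1. reflexivity.
  - reflexivity.
  - intros t Ht. unfold pconcat, cst. destruct (Rle_dec t (1/2)); congruence.
Qed.

Lemma assoc (X : dspace) (a b c d : X) (f g h : R -> X) :
  mor X a b f -> mor X b c g -> mor X c d h ->
  homeq X (whole X) (pconcat (pconcat f g) h) (pconcat f (pconcat g h)).
Proof.
  intros Mf Mg Mh.
  assert (Mw : mor X a d (pconcat f (pconcat g h))) by (eapply mor_concat; eauto; eapply mor_concat; eauto).
  destruct Mf as [Hf [F0 F1]]. destruct Mg as [Hg [G0 G1]]. destruct Mh as [Hh [H0 H1]].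
  destruct Mw as [Hw _].
  set (A := fun x : R => 0 + (1/2) * x). set (B := fun x : R => 1/2 + (1/4) * x).
  set (C := fun x : R => 3/4 + (1/4) * x).
  apply (reparam_homeq X (whole X) _ _ _ (pconcat (pconcat A B) C) (fun u => u) (2*1) 1 Hw);
    [| apply lmap_id | | | | reflexivity].
  - apply lmap_pconcat.
    + replace 1 with (2 * (1/2)) by field. apply lmap_pconcat.
      * unfold A. eapply lmap_weaken; [apply lmap_aff; lra| rewrite Rabs_right; lra].
      * unfold B. eapply lmap_weaken; [apply lmap_aff; lra| rewrite Rabs_right; lra].
      * unfold A, B; cbv beta; field.
    + unfold C. eapply lmap_weaken; [apply lmap_aff; lra| rewrite Rabs_right; lra].
    + rewrite pconcat_1. unfold B, C; cbv beta; field.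
  - rewrite !pconcat_0. unfold A; cbv beta; lra.
  - rewrite pconcat_1. unfold C; cbv beta; lra.
  - intros t Ht. unfold pconcat, A, B, C, unit_I in *.
    repeat destruct Rle_dec; try (exfalso; lra); try (f_equal; lra).
Qed.

(* [seg g a b]: the restriction of the path g to [a,b], reparametrised by
   [0,1]; it is written as in the definition of [piecewise]. *)
Definition seg {T : Type} (g : R -> T) (a b : R) : R -> T := fun s => g (a + s * (b - a)).

Lemma mor_seg (X : dspace) (x y : X) (g : R -> X) (a b : R) :
  mor X x y g -> 0 <= a -> a <= b -> b <= 1 -> mor X (g a) (g b) (seg g a b).
Proof.
  intros [[Hg _] _] H1 H2 H3. split; [split|split].
  - apply (dipath_reparam X g (fun s => a + (b - a) * s)).
    + exact Hg.
    + eapply lmap_nondecr, lmap_aff; lra.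
    + intros t _. unfold seg. f_equal; ring.
  - intros; exact I.
  - unfold seg. f_equal; ring.
  - unfold seg. f_equal; ring.
Qed.

Lemma seg_full (X : dspace) (x y : X) (g : R -> X) : mor X x y g -> homeq X (whole X) (seg g 0 1) g.
Proof.
  intros [Hg _]. apply (reparam_homeq X (whole X) g _ _ _ _ 1 1 Hg lmap_id lmap_id); auto.
  intros t _. unfold seg. f_equal; ring.
Qed.

Lemma seg_split (X : dspace) (x y : X) (g : R -> X) (a b c : R) :
  mor X x y g -> 0 <= a -> a <= b -> b <= c -> c <= 1 ->
  homeq X (whole X) (seg g a c) (pconcat (seg g a b) (seg g b c)).
Proof.
  intros [Hg _] H1 H2 H3 H4.
  apply (reparam_homeq X (whole X) g _ _ (fun s => a + (c - a) * s)
     (pconcat (fun s => a + (b - a) * s) (fun s => b + (c - b) * s)) (Rabs (c - a)) (2 * 1) Hg).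
  - apply lmap_aff; lra.
  - apply lmap_pconcat.
    + eapply lmap_weaken; [apply lmap_aff; lra| unfold Rabs; destruct Rcase_abs; lra].
    + eapply lmap_weaken; [apply lmap_aff; lra| unfold Rabs; destruct Rcase_abs; lra].
    + ring.
  - rewrite pconcat_0. ring.
  - rewrite pconcat_1. ring.
  - intros t _. unfold seg. f_equal; ring.
  - intros t _. unfold pconcat, seg. destruct Rle_dec; f_equal; ring.
Qed.

Lemma piecewise_ind (X : dspace) (X1 X2 : X -> Prop) (C : (R -> X) -> Prop) :
  (forall h, dipath_in X X1 h \/ dipath_in X X2 h -> C h) ->
  (forall z m w g1 g2, mor X z m g1 -> mor X m w g2 -> C g1 -> C g2 -> C (pconcat g1 g2)) ->
  (forall z w g g', mor X z w g -> homeq X (whole X) g g' -> C g -> C g') ->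
  forall g, dipath X g -> piecewise X X1 X2 g -> C g.
Proof.
  intros Cpiece Ccat Chomeq g Dg [n [ts [T0 [Tn [Tm Tp]]]]].
  assert (Mg : mor X (g 0) (g 1) g) by (split; [split; auto; intros; exact I| auto]).
  assert (Tmono : forall i j, (i <= j)%nat -> (j <= n)%nat -> ts i <= ts j).
  { intros i j Hij. induction Hij; intros Hjn; [lra|].
    apply Rle_trans with (ts m); [apply IHHij; lia| apply Tm; lia]. }
  assert (Tb : forall i, (i <= n)%nat -> 0 <= ts i /\ ts i <= 1).
  { intros i Hi. rewrite <- T0, <- Tn. split; apply Tmono; lia. }
  assert (Init : forall i, (1 <= i <= n)%nat -> C (seg g (ts 0%nat) (ts i))).
  { intros i. induction i as [|i IH]; intros Hi; [lia|].
    destruct (Nat.eq_dec i 0) as [->|Hi0]; [apply Cpiece, (Tp 0%nat); lia|].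
    destruct (Tb 0%nat ltac:(lia)), (Tb i ltac:(lia)), (Tb (S i) ltac:(lia)).
    assert (L1 : ts 0%nat <= ts i) by (apply Tmono; lia).
    assert (L2 : ts i <= ts (S i)) by (apply Tm; lia).
    apply (Chomeq (g (ts 0%nat)) (g (ts (S i))) (pconcat (seg g (ts 0%nat) (ts i)) (seg g (ts i) (ts (S i))))).
    - eapply mor_concat; eapply mor_seg; eauto.
    - apply rst_sym. eapply seg_split; eauto.
    - eapply Ccat; [eapply mor_seg; eauto| eapply mor_seg; eauto| apply IH; lia|].
      apply Cpiece, Tp. lia. }
  assert (Hn : (1 <= n)%nat) by (destruct n; [rewrite T0 in Tn; lra| lia]).
  apply (Chomeq (g 0) (g 1) (seg g 0 1)).
  - eapply mor_seg; eauto; lra.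
  - eapply seg_full; eauto.
  - rewrite <- T0 at 1. rewrite <- Tn. apply Init. lia.
Qed.

Lemma hom_concat (X : dspace) (B : X -> Prop) (a b d : X) (c e : R -> X) :
  hom X (whole X) B a b c -> hom X (whole X) B b d e -> hom X (whole X) B a d (pconcat c e).
Proof.
  intros H1 H2. destruct (mor_concat X a b d c e (hom_mor _ _ _ _ _ _ H1) (hom_mor _ _ _ _ _ _ H2))
    as [D [E0 E1]].
  destruct H1 as [Ba _]. destruct H2 as [_ [Bd _]]. repeat split; auto; apply D; auto.
Qed.

Lemma homeq_via (X : dspace) (Y1 Y2 : X -> Prop) (f1 f2 f0 : R -> X) :
  homeq X Y1 f1 f0 -> homeq X Y2 f2 f0 -> homeq X (whole X) f1 f2.
Proof.
  intros H1 H2. apply rst_trans with f0; [|apply rst_sym]; eapply homeq_whole; eauto.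
Qed.

Definition side (k : nat) : Prop := k = 1%nat \/ k = 2%nat.

(* The hypotheses are the consequences of the
   setup of lemma4p7 that the argument uses: X is covered by X1 and X2, every
   dipath is piecewise in X1 or X2, the Q_k and P_k (k = 1, 2) are future
   retracts whose units agree on X0 resp. B0, and P is a functor extending
   the P_k. *)
Section Naturality.

Variable X : dspace.
Variables X1 X2 A1 A2 B1 B2 : X -> Prop.
Variables (Qo Po : nat -> X -> X) (Qm Pm : nat -> (R -> X) -> (R -> X)) (theta eta : nat -> X -> R -> X).
Variables (P_o : X -> X) (P_m : (R -> X) -> (R -> X)).

Let X0 := fun x => X1 x /\ X2 x.
Let A0 := fun x => A1 x /\ A2 x.
Let B0 := fun x => B1 x /\ B2 x.
Let A := fun x => A1 x \/ A2 x.
Let B := fun x => B1 x \/ B2 x.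
Let Xk := fun k => sel3 k X0 X1 X2.
Let Ak := fun k => sel3 k A0 A1 A2.
Let Bk := fun k => sel3 k B0 B1 B2.

Hypothesis cover : forall z, X1 z \/ X2 z.
Hypothesis subdivision : forall g, dipath X g -> piecewise X X1 X2 g.
Hypothesis B1_X1 : forall x, B1 x -> X1 x.
Hypothesis B2_X2 : forall x, B2 x -> X2 x.
Hypothesis Q_retract :
  forall k, side k -> future_retract X (Xk k) (Xk k) (Bk k) (Qo k) (Qm k) (theta k).
Hypothesis Q_compat :
  forall z, X0 z -> Qo 1%nat z = Qo 2%nat z /\ homeq X (whole X) (theta 1%nat z) (theta 2%nat z).
Hypothesis P_retract :
  forall k, side k -> future_retract X (Xk k) (Bk k) (Ak k) (Po k) (Pm k) (eta k).
Hypothesis P_compat : forall b, B0 b -> homeq X (whole X) (eta 1%nat b) (eta 2%nat b).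
Hypothesis P_functor : is_functor X (whole X) B (whole X) A P_o P_m.
Hypothesis P_restricts : forall k, side k ->
  (forall x, Bk k x -> P_o x = Po k x) /\
  (forall a b g, hom X (Xk k) (Bk k) a b g -> homeq X (whole X) (P_m g) (Pm k g)).

Lemma Bk_Xk (k : nat) (z : X) : side k -> Bk k z -> Xk k z.
Proof. intros [-> | ->]; simpl; auto. Qed.

Lemma hom_side_whole (k : nat) (a b : X) (c : R -> X) : side k ->
  hom X (Xk k) (Bk k) a b c -> hom X (whole X) B a b c.
Proof.
  intros Hk [Ha [Hb [[Hc _] [E0 E1]]]].
  assert (BkB : forall z, Bk k z -> B z) by (destruct Hk as [-> | ->]; unfold B; simpl; auto).
  repeat split; auto.
Qed.

Lemma theta_mor (k : nat) (z : X) : side k -> Xk k z ->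
  mor X z (Qo k z) (theta k z) /\ Bk k (Qo k z).
Proof.
  intros Hk Hz. destruct (Q_retract k Hk) as [[Fo _] [Hu _]]. split; [eapply hom_mor|]; eauto.
Qed.

Lemma Q_natural (k : nat) (z w : X) (c : R -> X) : side k -> hom X (Xk k) (Xk k) z w c ->
  hom X (Xk k) (Bk k) (Qo k z) (Qo k w) (Qm k c) /\
  homeq X (whole X) (pconcat c (theta k w)) (pconcat (theta k z) (Qm k c)).
Proof.
  intros Hk Hc. destruct (Q_retract k Hk) as [[_ [Fh _]] [_ [Hn _]]].
  split; [eauto| eapply homeq_whole; eauto].
Qed.

Lemma Q_on_B (k : nat) (a : X) : side k -> Bk k a ->
  Qo k a = a /\ homeq X (whole X) (theta k a) (cst a).
Proof.
  intros Hk Ha. destruct (Q_retract k Hk) as [_ [_ [_ [_ Hr]]]].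
  destruct (Hr a Ha). split; [|eapply homeq_whole]; eauto.
Qed.

Lemma theta_indep (k j : nat) (z : X) : side k -> side j -> Xk k z -> Xk j z ->
  Qo k z = Qo j z /\ homeq X (whole X) (theta k z) (theta j z).
Proof.
  intros [-> | ->] [-> | ->] Hz1 Hz2; try (split; [reflexivity| apply rst_refl]).
  - apply Q_compat. split; auto.
  - destruct (Q_compat z) as [E T]; [split; auto|]. split; [auto| apply rst_sym; exact T].
Qed.

Lemma eta_indep (k j : nat) (b : X) : side k -> side j -> Bk k b -> Bk j b ->
  homeq X (whole X) (eta k b) (eta j b).
Proof.
  intros [-> | ->] [-> | ->] Hb1 Hb2; try apply rst_refl.
  - apply P_compat. split; auto.
  - apply rst_sym, P_compat. split; auto.
Qed.

Lemma eta_mor (k : nat) (b : X) : side k -> Bk k b -> mor X b (P_o b) (eta k b).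
Proof.
  intros Hk Hb. destruct (P_retract k Hk) as [_ [Hu _]].
  rewrite (proj1 (P_restricts k Hk)) by exact Hb. eapply hom_mor; eauto.
Qed.

Lemma P_mor (a b : X) (c : R -> X) : hom X (whole X) B a b c -> mor X (P_o a) (P_o b) (P_m c).
Proof. intros Hc. eapply hom_mor, (proj1 (proj2 P_functor)), Hc. Qed.

Lemma P_natural_side (k : nat) (a b : X) (c : R -> X) : side k -> hom X (Xk k) (Bk k) a b c ->
  homeq X (whole X) (pconcat c (eta k b)) (pconcat (eta k a) (P_m c)).
Proof.
  intros Hk Hc. destruct (P_retract k Hk) as [[_ [Fh _]] [_ [Hn _]]].
  destruct (P_restricts k Hk) as [R1 R2].
  assert (Ha : Bk k a) by (destruct Hc; tauto).
  eapply rst_trans; [eapply homeq_whole; apply Hn; eauto|].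
  eapply cong_r; [apply rst_sym; eapply R2; eauto| apply eta_mor; eauto|].
  destruct (Fh _ _ _ Hc) as [_ [_ [_ [E0 _]]]]. rewrite E0, R1; auto.
Qed.

Definition good (gm : R -> X) : Prop := forall k l z w, side k -> side l ->
  gm 0 = z -> gm 1 = w -> Xk k z -> Xk l w ->
  exists c, hom X (whole X) B (Qo k z) (Qo l w) c /\
    homeq X (whole X) (pconcat gm (theta l w)) (pconcat (theta k z) c) /\
    homeq X (whole X) (pconcat c (eta l (Qo l w))) (pconcat (eta k (Qo k z)) (P_m c)).

(* A dipath inside one half X_j is good, with c = Q_j(gm): this combines the
   naturality of theta_j and of eta_j with their independence of the half. *)
Lemma good_piece (j : nat) (gm : R -> X) : side j -> dipath_in X (Xk j) gm -> good gm.
Proof.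
  intros Hj Hgm k l z w Hk Hl E0 E1 Hz Hw.
  assert (Hzj : Xk j z) by (rewrite <- E0; apply Hgm; unfold unit_I; lra).
  assert (Hwj : Xk j w) by (rewrite <- E1; apply Hgm; unfold unit_I; lra).
  assert (Hh : hom X (Xk j) (Xk j) z w gm) by (repeat split; auto; apply Hgm).
  destruct (Q_natural j z w gm Hj Hh) as [Hc Nat].
  destruct (theta_indep k j z Hk Hj Hz Hzj) as [Ez Tz].
  destruct (theta_indep l j w Hl Hj Hw Hwj) as [Ew Tw].
  destruct (theta_mor k z Hk Hz) as [Mtk Bz]. destruct (theta_mor l w Hl Hw) as [Mtl Bw].
  destruct (theta_mor j z Hj Hzj) as [Mtj Bzj]. destruct (theta_mor j w Hj Hwj) as [_ Bwj].
  rewrite Ez, Ew in *.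
  exists (Qm j gm).
  assert (Mg : mor X z w gm) by (eapply hom_mor; eauto).
  assert (Mc : mor X (Qo j z) (Qo j w) (Qm j gm)) by (eapply hom_mor; eauto).
  split; [exact (hom_side_whole j _ _ _ Hj Hc)| split].
  - eapply rst_trans; [eapply cong_r; [exact Tw| exact Mg| exact (mor_src Mtl)]|].
    eapply rst_trans; [exact Nat|].
    eapply cong_l; [apply rst_sym; exact Tz| exact Mc| exact (mor_tgt Mtj)].
  - pose proof (eta_mor l (Qo j w) Hl Bw) as Me1.
    pose proof (eta_mor j (Qo j z) Hj Bzj) as Me2.
    eapply rst_trans; [eapply cong_r; [apply (eta_indep l j); auto| exact Mc| exact (mor_src Me1)]|].
    eapply rst_trans; [exact (P_natural_side j _ _ _ Hj Hc)|].
    eapply cong_l; [apply (eta_indep j k); auto| exact (P_mor _ _ _ (hom_side_whole j _ _ _ Hj Hc))| exact (mor_tgt Me2)].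
Qed.

(* Good paths compose: the middle point lies in some half X_j, and the two
   witnesses compose, using functoriality of P. *)
Lemma good_concat (z m w : X) (g1 g2 : R -> X) : mor X z m g1 -> mor X m w g2 ->
  good g1 -> good g2 -> good (pconcat g1 g2).
Proof.
  intros M1 M2 C1 C2 k l z' w' Hk Hl E0 E1 Hz Hw.
  rewrite pconcat_0 in E0. rewrite pconcat_1 in E1.
  pose proof M1 as [_ [M10 M11]]. pose proof M2 as [_ [M20 M21]].
  rewrite M10 in E0. rewrite M21 in E1. subst z' w'.
  assert (exists j, side j /\ Xk j m) as [j [Hj Hm]].
  { destruct (cover m); [exists 1%nat | exists 2%nat]; split; auto; [left|right]; auto. }
  destruct (C1 k j z m Hk Hj M10 M11 Hz Hm) as [c1 [Hc1 [N1 Q1]]].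
  destruct (C2 j l m w Hj Hl M20 M21 Hm Hw) as [c2 [Hc2 [N2 Q2]]].
  exists (pconcat c1 c2).
  pose proof (hom_mor _ _ _ _ _ _ Hc1) as Mc1. pose proof (hom_mor _ _ _ _ _ _ Hc2) as Mc2.
  destruct (theta_mor k z Hk Hz) as [Mtz Bz]. destruct (theta_mor j m Hj Hm) as [Mtm Bm].
  destruct (theta_mor l w Hl Hw) as [Mtw Bw].
  pose proof (P_mor _ _ _ Hc1) as MP1. pose proof (P_mor _ _ _ Hc2) as MP2.
  pose proof (eta_mor k _ Hk Bz) as Mez. pose proof (eta_mor j _ Hj Bm) as Mem.
  pose proof (eta_mor l _ Hl Bw) as Mew.
  split; [eapply hom_concat; eauto|split].
  - eapply rst_trans; [eapply assoc; eauto|].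
    eapply rst_trans; [eapply cong_r; [exact N2| exact M1| rewrite pconcat_0; exact M20]|].
    eapply rst_trans; [apply rst_sym; eapply assoc; eauto|].
    eapply rst_trans; [eapply cong_l; [exact N1| exact Mc2| rewrite pconcat_1; exact (mor_tgt Mtm)]|].
    eapply assoc; eauto.
  - eapply rst_trans; [eapply assoc; eauto|].
    eapply rst_trans; [eapply cong_r; [exact Q2| exact Mc1| rewrite pconcat_0; exact (mor_src Mc2)]|].
    eapply rst_trans; [apply rst_sym; eapply assoc; eauto|].
    eapply rst_trans; [eapply cong_l; [exact Q1| exact MP2| rewrite pconcat_1; exact (mor_tgt Mem)]|].
    eapply rst_trans; [eapply assoc; eauto|].
    eapply cong_r; [| exact Mez| rewrite pconcat_0; exact (mor_src MP1)].
    apply rst_sym. eapply (proj2 (proj2 (proj2 (proj2 P_functor)))); eauto.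
Qed.

Lemma good_homeq (z w : X) (g g' : R -> X) : mor X z w g -> homeq X (whole X) g g' ->
  good g -> good g'.
Proof.
  intros M H Cg k l z' w' Hk Hl E0 E1 Hz Hw.
  destruct (homeq_endpoints _ _ _ _ H) as [F0 F1].
  destruct (Cg k l z' w' Hk Hl ltac:(congruence) ltac:(congruence) Hz Hw) as [c [Hc [N Q]]].
  exists c. split; [exact Hc| split; [|exact Q]].
  eapply rst_trans; [|exact N].
  eapply cong_l; [apply rst_sym; exact H| exact (proj1 (theta_mor l w' Hl Hw))| congruence].
Qed.

Lemma good_dipath (g : R -> X) : dipath X g -> good g.
Proof.
  intros Dg. apply (piecewise_ind X X1 X2); auto.
  - intros h [Hh|Hh]; [apply (good_piece 1%nat)| apply (good_piece 2%nat)]; unfold side; auto.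
  - apply good_concat.
  - apply good_homeq.
Qed.

(* The naturality of eta with respect to P, in pi1(X, B): for g : x -> y with
   x, y in B, theta is trivial at x and y, so g equals the witness c of its
   goodness, for which the square commutes. *)
Lemma eta_natural (x y : X) (g : R -> X) (k l : nat) : side k -> side l ->
  Bk k x -> Bk l y -> hom X (whole X) B x y g ->
  homeq X (whole X) (pconcat g (eta l y)) (pconcat (eta k x) (P_m g)).
Proof.
  intros Hk Hl Hx Hy Hg.
  pose proof (hom_mor _ _ _ _ _ _ Hg) as Mg. pose proof Mg as [[Dg _] [G0 G1]].
  destruct (good_dipath g Dg k l x y Hk Hl G0 G1 (Bk_Xk k x Hk Hx) (Bk_Xk l y Hl Hy))
    as [c [Hc [N Q]]].
  destruct (Q_on_B k x Hk Hx) as [Ex Tx]. destruct (Q_on_B l y Hl Hy) as [Ey Ty].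
  destruct (theta_mor k x Hk (Bk_Xk k x Hk Hx)) as [Mt _].
  rewrite Ex, Ey in *.
  pose proof (hom_mor _ _ _ _ _ _ Hc) as Mc.
  assert (gc : homeq X (whole X) g c).
  { eapply rst_trans; [apply rst_sym; eapply unit_r; exact Mg|].
    eapply rst_trans; [eapply cong_r; [apply rst_sym; exact Ty| exact Mg| reflexivity]|].
    eapply rst_trans; [exact N|].
    eapply rst_trans; [eapply cong_l; [exact Tx| exact Mc| exact (mor_tgt Mt)]|].
    eapply unit_l; exact Mc. }
  eapply rst_trans; [eapply cong_l; [exact gc| eapply eta_mor; eauto| exact G1]|].
  eapply rst_trans; [exact Q|].
  eapply cong_r; [| eapply eta_mor; eauto| exact (mor_src (P_mor _ _ _ Hc))].
  eapply (proj1 (proj2 (proj2 P_functor))); [exact Hc| exact Hg| apply rst_sym; exact gc].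
Qed.

End Naturality.

Theorem lemma4p7 (X : dspace) (X1 X2 A1 A2 B1 B2 : X -> Prop)
  (Qo : nat -> X -> X) (Qm : nat -> (R -> X) -> (R -> X)) (theta : nat -> X -> R -> X)
  (Po : nat -> X -> X) (Pm : nat -> (R -> X) -> (R -> X)) (eta : nat -> X -> R -> X)
  (P_o : X -> X) (P_m : (R -> X) -> (R -> X)) :
  let X0 := fun x => X1 x /\ X2 x in
  let A0 := fun x => A1 x /\ A2 x in
  let B0 := fun x => B1 x /\ B2 x in
  let A := fun x => A1 x \/ A2 x in
  let B := fun x => B1 x \/ B2 x in
  let Xk := fun k => sel3 k X0 X1 X2 in
  let Ak := fun k => sel3 k A0 A1 A2 in
  let Bk := fun k => sel3 k B0 B1 B2 in
  (* van Kampen setup *)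
  (forall x, dinterior X X1 x \/ dinterior X X2 x) ->
  (forall g, dipath X g <-> piecewise X X1 X2 g) ->
  (forall x, A1 x -> B1 x) -> (forall x, B1 x -> X1 x) ->
  (forall x, A2 x -> B2 x) -> (forall x, B2 x -> X2 x) ->
  (forall x, A x <-> rel_interior X A A1 x \/ rel_interior X A A2 x) ->
  (forall x, B x <-> rel_interior X B B1 x \/ rel_interior X B B2 x) ->
  (* compatible future retracts Q_k : pi1(X_k) -> pi1(X_k, B_k) *)
  (forall k, (k <= 2)%nat -> future_retract X (Xk k) (Xk k) (Bk k) (Qo k) (Qm k) (theta k)) ->
  (forall k, (k = 1 \/ k = 2)%nat ->
     (forall x, X0 x -> Qo k x = Qo 0%nat x) /\
     (forall a b g, hom X X0 X0 a b g -> homeq X (Xk k) (Qm k g) (Qm 0%nat g)) /\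
     (forall x, X0 x -> homeq X (Xk k) (theta k x) (theta 0%nat x))) ->
  (* compatible future retracts P_k : pi1(X_k, B_k) -> pi1(X_k, A_k) *)
  (forall k, (k <= 2)%nat -> future_retract X (Xk k) (Bk k) (Ak k) (Po k) (Pm k) (eta k)) ->
  (forall k, (k = 1 \/ k = 2)%nat ->
     (forall x, B0 x -> Po k x = Po 0%nat x) /\
     (forall a b g, hom X X0 B0 a b g -> homeq X (Xk k) (Pm k g) (Pm 0%nat g)) /\
     (forall x, B0 x -> homeq X (Xk k) (eta k x) (eta 0%nat x))) ->
  (* P : pi1(X,B) -> pi1(X,A) a functor with P o j_k = j'_k o P_k *)
  is_functor X (fun _ => True) B (fun _ => True) A P_o P_m ->
  (forall k, (k = 1 \/ k = 2)%nat ->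
     (forall x, Bk k x -> P_o x = Po k x) /\
     (forall a b g, hom X (Xk k) (Bk k) a b g -> homeq X (fun _ => True) (P_m g) (Pm k g))) ->
  (* conclusion: eta_y o [g] = P([g]) o eta_x in pi1(X,B) *)
  forall x y g k l, (k = 1 \/ k = 2)%nat -> (l = 1 \/ l = 2)%nat ->
    Bk k x -> Bk l y -> hom X (fun _ => True) B x y g ->
    homeq X (fun _ => True) (pconcat g (eta l y)) (pconcat (eta k x) (P_m g)).
Proof.
  intros X0 A0 B0 A B Xk Ak Bk Hint Hpw _ HBX1 _ HBX2 _ _ HQ HQc HP HPc HPf HPrel.
  assert (side_le : forall j, side j -> (j <= 2)%nat) by (intros j [-> | ->]; lia).
  apply (eta_natural X X1 X2 A1 A2 B1 B2 Qo Po Qm Pm theta eta P_o P_m); auto.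
  -
    intros z. destruct (Hint z) as [[U [_ [Uz S]]]|[U [_ [Uz S]]]]; auto.
  -
    intros h. apply Hpw.
  -
    intros j Hj. apply HQ, side_le, Hj.
  -
    intros z Hz.
    destruct (HQc 1%nat (or_introl eq_refl)) as [E1 [_ T1]].
    destruct (HQc 2%nat (or_intror eq_refl)) as [E2 [_ T2]].
    split; [rewrite E1, E2 by exact Hz; reflexivity| eapply homeq_via; [apply T1| apply T2]; exact Hz].
  -
    intros j Hj. apply HP, side_le, Hj.
  -
    intros b Hb.
    destruct (HPc 1%nat (or_introl eq_refl)) as [_ [_ T1]].
    destruct (HPc 2%nat (or_intror eq_refl)) as [_ [_ T2]].
    eapply homeq_via; [apply T1| apply T2]; exact Hb.
Qed.
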